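(* Let $\varepsilon>1$ and $\lambda\ge0$ with $\lambda\neq\lambda_c(\varepsilon)$. (a) If $0\le\lambda<\lambda_c(\varepsilon)$, the function $\xi\mapsto G_{\varepsilon,\lambda}(\xi,\pi_{\xi-}(\xi))$, defined on the incoming branch $\{(\xi,\pi_{\xi-}(\xi)):\xi\ge2\}$, is smooth and increases monotonically from $-\infty$ to $0$ as one moves along this branch from $\xi=\infty$ to $\xi=2$. (b) If $\lambda>\lambda_c(\varepsilon)$, the function $G_{\varepsilon,\lambda}$ on the scattering curve $\mathcal C=\{(\xi,\pi_{\xi\pm}(\xi)):\xi\ge\xi_0\}$ is smooth (including at the turning point) and increases monotonically from $-\infty$ to $+\infty$ as one moves along $\mathcal C$ clockwise, i.e. from $\xi=\infty$ along the incoming branch $\pi_{\xi-}$ through the turning point $\xi_0$ to $\xi=\infty$ along the outgoing branch $\pi_{\xi+}$.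
   Context: Dimensionless potential: $U_\lambda(\xi)=(1-\tfrac2\xi)(1+\tfrac{\lambda^2}{\xi^2})$. For $\varepsilon>1$, $\lambda_c(\varepsilon)$ is the value of $\lambda$ for which the local maximum of $U_\lambda$ equals $\varepsilon^2$; explicitly $\lambda_c(\varepsilon)^2=12/(1-4\alpha-8\alpha^2+8\alpha\sqrt{\alpha^2+\alpha})$, $\alpha=\tfrac98\varepsilon^2-1$. Let $s(\xi)=\sqrt{\varepsilon^2-U_\lambda(\xi)}$ and $\pi_{\xi\pm}(\xi)=(\tfrac2\xi\varepsilon\pm s(\xi))/(1-\tfrac2\xi)$ (for the minus sign, equivalently $\pi_{\xi-}=(1+\lambda^2/\xi^2-(1+\tfrac2\xi)\varepsilon^2)/(\tfrac2\xi\varepsilon+s)$, regular at $\xi=2$); these are the solutions of $(1-\tfrac2\xi)\pi_\xi^2-\tfrac4\xi\varepsilon\pi_\xi-(1+\tfrac2\xi)\varepsilon^2+1+\tfrac{\lambda^2}{\xi^2}=0$. The function $G_{\varepsilon,\lambda}$ is the line integral along this curve $G_{\varepsilon,\lambda}(\xi,\pi_\xi)=\int_{\gamma_{(\xi,\pi_\xi)}}\frac{\frac2\xi\pi_\xi+(1+\frac2\xi)\varepsilon}{(1-\frac2\xi)\pi_\xi-\frac2\xi\varepsilon}d\xi$ from a reference point to $(\xi,\pi_\xi)$: in case $\lambda<\lambda_c(\varepsilon)$ the reference point is $(2,\pi_{\xi-}(2))$ on the incoming branch; in case $\lambda>\lambda_c(\varepsilon)$ it is the turning point $(\xi_0,\pi_{\xi\pm}(\xi_0))$,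 where $\xi_0$ is the unique root of $U_\lambda(\xi_0)=\varepsilon^2$ larger than the location of the maximum of $U_\lambda$. *)

From Stdlib Require Import Reals Lra.
From Coquelicot Require Import Coquelicot.
Open Scope R_scope.

Definition U (lam x : R) : R := (1 - 2 / x) * (1 + lam ^ 2 / x ^ 2).

Definition alpha (eps : R) : R := 9 / 8 * eps ^ 2 - 1.
Definition lambda_c (eps : R) : R :=
  let a := alpha eps in
  sqrt (12 / (1 - 4 * a - 8 * a ^ 2 + 8 * a * sqrt (a ^ 2 + a))).

Definition s_fun (eps lam x : R) : R := sqrt (eps ^ 2 - U lam x).

Definition pi_plus (eps lam x : R) : R :=
  (2 / x * eps + s_fun eps lam x) / (1 - 2 / x).

(* incoming branch pi_{xi-}, in the form regular at xi = 2 *)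
Definition pi_minus (eps lam x : R) : R :=
  (1 + lam ^ 2 / x ^ 2 - (1 + 2 / x) * eps ^ 2) / (2 / x * eps + s_fun eps lam x).

(* the integrand of the 1-form defining G: integrand(xi, pi) dxi *)
Definition integrand (eps x p : R) : R :=
  (2 / x * p + (1 + 2 / x) * eps) / ((1 - 2 / x) * p - 2 / x * eps).

Definition G_in (eps lam x : R) : R :=
  RInt (fun t => integrand eps t (pi_minus eps lam t)) 2 x.

(* location of the local maximum of U_lambda (root of U' = 0, smaller one) *)
Definition xi_max (lam : R) : R := (lam ^ 2 - sqrt (lam ^ 4 - 12 * lam ^ 2)) / 2.

(* Case lambda > lambda_c: regular parametrization of the scattering curve C,
   tau in R |-> (xi0 + tau^2, pi(tau)), tau < 0 on the incoming branch,
   tau > 0 on the outgoing branch, tau = 0 the turning point; increasing tau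
   is the clockwise orientation (xi = oo incoming -> xi0 -> xi = oo outgoing). *)
Definition curve_xi (xi0 t : R) : R := xi0 + t ^ 2.
Definition curve_pi (eps lam xi0 t : R) : R :=
  if Rlt_dec t 0 then pi_minus eps lam (curve_xi xi0 t)
  else pi_plus eps lam (curve_xi xi0 t).

Definition G_scat (eps lam xi0 tau : R) : R :=
  RInt (fun t => integrand eps (curve_xi xi0 t) (curve_pi eps lam xi0 t) * (2 * t))
       0 tau.

From Stdlib Require Import Reals Lra.
From Coquelicot Require Import Coquelicot.
Open Scope R_scope.

(* Everything is governed by the cubic P(x) = x^3 (eps^2 - U_lambda(x)).
   (a) For lambda < lambda_c, P has no positive root (at lambda_c it acquires a double
   one, at the maximum of U), so pi_- is smooth on (0, oo).  There the integrand is N/(-s) with N >= s/2 when xi >= 2, i.e. at most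
   -1/2, so G decreases at least linearly along the incoming branch.
   (b) The turning point xi0 is a simple root of P, so eps^2 - U(xi0 + t^2) =
   t^2 q(t^2) with q > 0 and s = |t| sqrt q.  In the parameter t both branches merge
   into one smooth momentum, and the pulled-back integrand becomes a smooth density g
   with g(t) > 0 and g(t) >= |t|; hence G is smooth, strictly increasing and
   unbounded in both directions. *)

(* Smoothness is recorded with explicit derivative witnesses on [D], which makes it
   closed under composition, unlike the pointwise [ex_derive_n]. *)
Fixpoint derivable_n_on (D : R -> Prop) (n : nat) (f : R -> R) : Prop :=
  match n with
  | O => True
  | S n => exists f', (forall x, D x -> is_derive f x (f' x)) /\ derivable_n_on D n f'
  end.

Definition is_interval (D : R -> Prop) : Prop :=
  forall x y z, D x -> D y -> x <= z <= y -> D z.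

Lemma is_interval_gt_0 : is_interval (fun x => 0 < x).
Proof. intros x y z Hx _ Hz; lra. Qed.

Lemma is_interval_True : is_interval (fun _ => True).
Proof. intros x y z _ _ _; exact I. Qed.

Section DerivableNOn.
Variable D : R -> Prop.

Lemma derivable_n_on_weaken n f : derivable_n_on D (S n) f -> derivable_n_on D n f.
Proof.
  revert f; induction n as [|n IH]; intros f [f' [Hf' Hn]]; simpl; auto.
  exists f'; auto.
Qed.

Lemma derivable_n_on_const n c : derivable_n_on D n (fun _ => c).
Proof.
  revert c; induction n as [|n IH]; intros c; simpl; auto.
  exists (fun _ => 0); split; auto.
  intros x _; apply (is_derive_const c x).
Qed.

Lemma derivable_n_on_id n : derivable_n_on D n (fun x => x).
Proof.
  destruct n; simpl; auto.
  exists (fun _ => 1); split; [intros x _; apply (is_derive_id x) | apply derivable_n_on_const].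
Qed.

Lemma derivable_n_on_plus n f g :
  derivable_n_on D n f -> derivable_n_on D n g -> derivable_n_on D n (fun x => f x + g x).
Proof.
  revert f g; induction n as [|n IH]; intros f g; simpl; auto.
  intros [f' [Hf Hf']] [g' [Hg Hg']].
  exists (fun x => f' x + g' x); split; auto.
  intros x Hx; apply (is_derive_plus f g x); auto.
Qed.

Lemma derivable_n_on_opp n f :
  derivable_n_on D n f -> derivable_n_on D n (fun x => - f x).
Proof.
  revert f; induction n as [|n IH]; intros f; simpl; auto.
  intros [f' [Hf Hf']].
  exists (fun x => - f' x); split; auto.
  intros x Hx; apply (is_derive_opp f x); auto.
Qed.

Lemma derivable_n_on_minus n f g :
  derivable_n_on D n f -> derivable_n_on D n g -> derivable_n_on D n (fun x => f x - g x).
Proof. intros Hf Hg; apply derivable_n_on_plus, derivable_n_on_opp; auto. Qed.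

Lemma derivable_n_on_mult n f g :
  derivable_n_on D n f -> derivable_n_on D n g -> derivable_n_on D n (fun x => f x * g x).
Proof.
  revert f g; induction n as [|n IH]; intros f g Hf Hg; simpl; auto.
  pose proof (derivable_n_on_weaken n f Hf) as Hfn.
  pose proof (derivable_n_on_weaken n g Hg) as Hgn.
  destruct Hf as [f' [Hf Hf']], Hg as [g' [Hg Hg']].
  exists (fun x => f' x * g x + f x * g' x); split.
  - intros x Hx; apply (is_derive_mult f g x); auto; intros; apply Rmult_comm.
  - apply derivable_n_on_plus; apply IH; auto.
Qed.

Lemma derivable_n_on_pow n f k :
  derivable_n_on D n f -> derivable_n_on D n (fun x => f x ^ k).
Proof.
  intros Hf; induction k as [|k IH]; simpl.
  - apply derivable_n_on_const.
  - apply derivable_n_on_mult; auto.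
Qed.

Lemma derivable_n_on_ext n f g : open D -> (forall x, D x -> f x = g x) ->
  derivable_n_on D n f -> derivable_n_on D n g.
Proof.
  intros HD Hfg; destruct n as [|n]; simpl; auto.
  intros [f' [Hf Hf']]; exists f'; split; auto.
  intros x Hx; apply (is_derive_ext_loc f g); auto.
  apply (filter_imp D); [exact Hfg | exact (HD x Hx)].
Qed.

Lemma derivable_n_on_continuous n f x :
  derivable_n_on D (S n) f -> D x -> continuous f x.
Proof.
  intros [f' [Hf _]] Hx.
  apply (ex_derive_continuous (K := R_AbsRing) (V := R_NormedModule)).
  exists (f' x); auto.
Qed.

Lemma derivable_n_on_ex_RInt n f a b : is_interval D -> D a -> D b ->
  derivable_n_on D (S n) f -> ex_RInt f a b.
Proof.
  intros HD Ha Hb Hf; apply (ex_RInt_continuous (V := R_CompleteNormedModule)).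
  intros z Hz; apply (derivable_n_on_continuous n); auto.
  destruct (Rle_dec a b) as [Hab|Hab].
  - rewrite Rmin_left, Rmax_right in Hz by lra; exact (HD a b z Ha Hb Hz).
  - rewrite Rmin_right, Rmax_left in Hz by lra; exact (HD b a z Hb Ha Hz).
Qed.

Lemma derivable_n_on_RInt n f a : open D -> is_interval D -> D a ->
  derivable_n_on D (S n) f -> derivable_n_on D (S (S n)) (fun x => RInt f a x).
Proof.
  intros HDo HDi Ha Hf; exists f; split; auto.
  intros b Hb; apply is_derive_RInt with (a := a).
  - apply (filter_imp D); [|exact (HDo b Hb)].
    intros c Hc; apply (RInt_correct (V := R_CompleteNormedModule)).
    apply (derivable_n_on_ex_RInt n); auto.
  - apply (derivable_n_on_continuous n); auto.
Qed.

Lemma Derive_n_S f k x : Derive_n f (S k) x = Derive_n (Derive f) k x.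
Proof.
  revert x; induction k as [|k IH]; intros x; simpl; auto.
  apply Derive_ext; intros t; apply IH.
Qed.

Lemma derivable_n_on_ex_derive_n n f x : open D ->
  derivable_n_on D (S n) f -> D x -> ex_derive_n f n x.
Proof.
  intros HD; revert f x; induction n as [|n IH]; intros f x Hf Hx; simpl; auto.
  destruct Hf as [f' [Hf Hf']].
  assert (HDf : derivable_n_on D (S n) (Derive f)).
  { apply (derivable_n_on_ext _ f'); auto.
    intros y Hy; symmetry; apply is_derive_unique; auto. }
  specialize (IH _ x HDf Hx).
  destruct n as [|n]; simpl.
  - exists (f' x); auto.
  - apply (ex_derive_ext (Derive_n (Derive f) n)); [|exact IH].
    intros t; symmetry; apply Derive_n_S.
Qed.

End DerivableNOn.

Lemma derivable_n_on_comp (D E : R -> Prop) n f g :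
  (forall x, D x -> E (g x)) ->
  derivable_n_on E n f -> derivable_n_on D n g -> derivable_n_on D n (fun x => f (g x)).
Proof.
  revert f g; induction n as [|n IH]; intros f g HDE Hf Hg; simpl; auto.
  pose proof (derivable_n_on_weaken D n g Hg) as Hgn.
  destruct Hf as [f' [Hf Hf']], Hg as [g' [Hg Hg']].
  exists (fun x => g' x * f' (g x)); split.
  - intros x Hx; apply (is_derive_comp f g x); auto.
  - apply derivable_n_on_mult; auto.
Qed.

Lemma derivable_n_on_Rinv n : derivable_n_on (fun x => x <> 0) n Rinv.
Proof.
  induction n as [|n IH]; simpl; auto.
  exists (fun x => - (/ x * / x)); split.
  - intros x Hx.
    replace (- (/ x * / x)) with (- 1 / x ^ 2) by (field; auto).
    exact (is_derive_inv (fun y => y) x 1 (is_derive_id x) Hx).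
  - apply derivable_n_on_opp, derivable_n_on_mult; exact IH.
Qed.

Lemma derivable_n_on_inv D n f : (forall x, D x -> f x <> 0) ->
  derivable_n_on D n f -> derivable_n_on D n (fun x => / f x).
Proof.
  intros Hf0 Hf; apply (derivable_n_on_comp D (fun x => x <> 0)); auto.
  apply derivable_n_on_Rinv.
Qed.

Lemma derivable_n_on_div D n f g : (forall x, D x -> g x <> 0) ->
  derivable_n_on D n f -> derivable_n_on D n g -> derivable_n_on D n (fun x => f x / g x).
Proof.
  intros Hg0 Hf Hg; apply derivable_n_on_mult; auto.
  apply derivable_n_on_inv; auto.
Qed.

Lemma derivable_n_on_sqrt_pos n : derivable_n_on (fun x => 0 < x) n sqrt.
Proof.
  induction n as [|n IH]; simpl; auto.
  exists (fun x => / (2 * sqrt x)); split.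
  - intros x Hx.
    pose proof (sqrt_lt_R0 x Hx).
    replace (/ (2 * sqrt x)) with (1 / (2 * sqrt x)) by (field; lra).
    exact (is_derive_sqrt (fun y => y) x 1 (is_derive_id x) Hx).
  - apply derivable_n_on_inv.
    + intros x Hx; pose proof (sqrt_lt_R0 x Hx); lra.
    + apply (derivable_n_on_mult _ n (fun _ => 2)); [apply derivable_n_on_const | exact IH].
Qed.

Lemma derivable_n_on_sqrt D n f : (forall x, D x -> 0 < f x) ->
  derivable_n_on D n f -> derivable_n_on D n (fun x => sqrt (f x)).
Proof.
  intros Hf0 Hf; apply (derivable_n_on_comp D (fun x => 0 < x)); auto.
  apply derivable_n_on_sqrt_pos.
Qed.

Ltac derivable_n_on_rules :=
  repeat first
    [ apply derivable_n_on_const | apply derivable_n_on_id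
    | apply derivable_n_on_minus | apply derivable_n_on_plus | apply derivable_n_on_opp
    | apply derivable_n_on_div | apply derivable_n_on_mult | apply derivable_n_on_inv
    | apply derivable_n_on_pow | apply derivable_n_on_sqrt ].

Lemma RInt_ge_length (g : R -> R) c a b : a <= b -> ex_RInt g a b ->
  (forall x, a < x < b -> c <= g x) -> c * (b - a) <= RInt g a b.
Proof.
  intros Hab Hg Hc.
  assert (H := RInt_le (fun _ => c) g a b Hab (ex_RInt_const a b c) Hg Hc).
  rewrite RInt_const in H; unfold scal in H; simpl in H; unfold mult in H; simpl in H; lra.
Qed.

Lemma RInt_le_length (g : R -> R) c a b : a <= b -> ex_RInt g a b ->
  (forall x, a < x < b -> g x <= c) -> RInt g a b <= c * (b - a).
Proof.
  intros Hab Hg Hc.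
  assert (H := RInt_le g (fun _ => c) a b Hab Hg (ex_RInt_const a b c) Hc).
  rewrite RInt_const in H; unfold scal in H; simpl in H; unfold mult in H; simpl in H; lra.
Qed.

Lemma Rmin_Rmax_0_neq tau x : Rmin 0 tau < x < Rmax 0 tau -> x <> 0.
Proof. unfold Rmin, Rmax; destruct (Rle_dec 0 tau); lra. Qed.

Lemma is_lim_p_infty_of_ge_affine (f : R -> R) a c : 0 < c ->
  (forall x, a <= x -> c * (x - a) <= f x) -> is_lim f p_infty p_infty.
Proof.
  intros Hc Hf; apply is_lim_spec; intros M.
  exists (Rmax a (a + M / c)); intros x Hx.
  pose proof (Rmax_l a (a + M / c)); pose proof (Rmax_r a (a + M / c)).
  assert (M < c * (x - a)); [|pose proof (Hf x ltac:(lra)); lra].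
  replace M with (c * (a + M / c - a)) by (field; lra).
  apply Rmult_lt_compat_l; lra.
Qed.

Lemma is_lim_p_infty_of_le_affine (f : R -> R) a c : 0 < c ->
  (forall x, a <= x -> f x <= - c * (x - a)) -> is_lim f p_infty m_infty.
Proof.
  intros Hc Hf; apply is_lim_spec; intros M.
  exists (Rmax a (a - M / c)); intros x Hx.
  pose proof (Rmax_l a (a - M / c)); pose proof (Rmax_r a (a - M / c)).
  assert (- c * (x - a) < M); [|pose proof (Hf x ltac:(lra)); lra].
  replace M with (- c * (a - M / c - a)) by (field; lra).
  apply Rmult_lt_compat_l with (r := c) in Hx; [|lra]; nra.
Qed.

Lemma is_lim_m_infty_of_le_affine (f : R -> R) a c : 0 < c ->
  (forall x, x <= a -> f x <= c * (x - a)) -> is_lim f m_infty m_infty.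
Proof.
  intros Hc Hf; apply is_lim_spec; intros M.
  exists (Rmin a (a + M / c)); intros x Hx.
  pose proof (Rmin_l a (a + M / c)); pose proof (Rmin_r a (a + M / c)).
  assert (c * (x - a) < M); [|pose proof (Hf x ltac:(lra)); lra].
  replace M with (c * (a + M / c - a)) by (field; lra).
  apply Rmult_lt_compat_l; lra.
Qed.

Definition radial_cubic (eps lam x : R) : R :=
  (eps ^ 2 - 1) * x ^ 3 + 2 * x ^ 2 - lam ^ 2 * x + 2 * lam ^ 2.

Lemma eps2_sub_U eps lam x : x <> 0 ->
  eps ^ 2 - U lam x = radial_cubic eps lam x / x ^ 3.
Proof. intros Hx; unfold U, radial_cubic; field; auto. Qed.

(* The substitution alpha = 1 / (v^2 - 1) rationalises lambda_c. *)
Lemma lambda_c_param eps : 1 < eps -> exists v, 1 < v < 3 /\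
  eps ^ 2 = 8 * v ^ 2 / (9 * (v ^ 2 - 1)) /\
  lambda_c eps ^ 2 = 12 * (v + 1) ^ 2 / ((v - 1) * (v + 3)).
Proof.
  intros Heps; unfold lambda_c.
  assert (Ha : 1 / 8 < alpha eps) by (unfold alpha; nra).
  assert (Heps2 : eps ^ 2 = 8 * (alpha eps + 1) / 9) by (unfold alpha; field).
  set (a := alpha eps) in *.
  set (v := sqrt (1 + / a)).
  assert (Hinv : 0 < / a < 8).
  { split; [apply Rinv_0_lt_compat; lra|].
    replace 8 with (/ (1 / 8)) by field; apply Rinv_lt_contravar; nra. }
  assert (Hv2 : v ^ 2 = 1 + / a) by (apply pow2_sqrt; lra).
  assert (Hv0 : 0 <= v) by apply sqrt_pos.
  assert (Hv : 1 < v < 3) by (split; nra).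
  assert (Hav : a = / (v ^ 2 - 1)) by (rewrite Hv2; field; lra).
  assert (Hsq : sqrt (a ^ 2 + a) = a * v).
  { rewrite <- (sqrt_pow2 (a * v)) by nra; f_equal.
    rewrite Rpow_mult_distr, Hv2; field; lra. }
  assert (Hden : 1 - 4 * a - 8 * a ^ 2 + 8 * a * sqrt (a ^ 2 + a)
                 = (v - 1) * (v + 3) / (v + 1) ^ 2).
  { rewrite Hsq, Hav; field; split; nra. }
  exists v; split; [exact Hv|split].
  - rewrite Heps2, Hav; field; nra.
  - rewrite Hden, pow2_sqrt.
    + field; repeat split; nra.
    + apply Rlt_le, Rdiv_lt_0_compat; [lra|].
      apply Rdiv_lt_0_compat; [nra | apply pow_lt; lra].
Qed.

(* At lambda = lambda_c the local maximum of U touches eps^2: a double root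
   at x = 6 (v + 1) / (v + 3). *)
Lemma radial_cubic_critical eps lam v x : 1 < v ->
  eps ^ 2 = 8 * v ^ 2 / (9 * (v ^ 2 - 1)) ->
  lam ^ 2 = 12 * (v + 1) ^ 2 / ((v - 1) * (v + 3)) ->
  radial_cubic eps lam x =
  ((v + 3) * x - 6 * (v + 1)) ^ 2 * ((3 - v) * x + 6 * (v + 1)) / (9 * (v ^ 2 - 1) * (v + 3)).
Proof.
  intros Hv Heps Hlam; unfold radial_cubic; rewrite Heps, Hlam.
  field; repeat split; nra.
Qed.

Lemma radial_cubic_subcritical_pos eps lam x : 1 < eps -> 0 <= lam ->
  lam < lambda_c eps -> 0 < x -> 0 < radial_cubic eps lam x.
Proof.
  intros Heps Hlam Hc Hx.
  destruct (lambda_c_param eps Heps) as [v [Hv [Heps2 Hlc]]].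
  assert (Hlam2 : lam ^ 2 < lambda_c eps ^ 2) by nra.
  assert (Hshift : radial_cubic eps lam x =
    radial_cubic eps (lambda_c eps) x + (lambda_c eps ^ 2 - lam ^ 2) * (x - 2))
    by (unfold radial_cubic; ring).
  assert (He1 : 0 < eps ^ 2 - 1) by nra.
  assert (Hx3 : 0 < x ^ 3) by (apply pow_lt; lra).
  destruct (Rle_lt_dec x 2) as [Hx2|Hx2].
  - unfold radial_cubic; nra.
  - rewrite Hshift, (radial_cubic_critical eps (lambda_c eps) v x) by (auto; lra).
    assert (0 <= ((v + 3) * x - 6 * (v + 1)) ^ 2 * ((3 - v) * x + 6 * (v + 1))
                 / (9 * (v ^ 2 - 1) * (v + 3))).
    { apply Rdiv_le_0_compat; [apply Rmult_le_pos; [apply pow2_ge_0 | nra]|].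
      assert (0 < v ^ 2 - 1) by nra; nra. }
    nra.
Qed.

Lemma U_lt_eps2_subcritical eps lam x : 1 < eps -> 0 <= lam ->
  lam < lambda_c eps -> 0 < x -> U lam x < eps ^ 2.
Proof.
  intros Heps Hlam Hc Hx.
  assert (0 < eps ^ 2 - U lam x); [|lra].
  rewrite eps2_sub_U by lra.
  apply Rdiv_lt_0_compat; [apply radial_cubic_subcritical_pos | apply pow_lt]; auto.
Qed.

Lemma U_nonneg lam x : 2 <= x -> 0 <= U lam x.
Proof.
  intros Hx; unfold U; apply Rmult_le_pos.
  - assert (2 / x <= 1) by (apply Rcomplements.Rle_div_l; lra); lra.
  - assert (0 <= lam ^ 2 / x ^ 2)
      by (apply Rdiv_le_0_compat; [apply pow2_ge_0 | apply pow_lt; lra]); lra.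
Qed.

Lemma s_fun_le eps lam x : 0 <= eps -> 2 <= x -> s_fun eps lam x <= eps.
Proof.
  intros Heps Hx; pose proof (U_nonneg lam x Hx).
  unfold s_fun; rewrite <- (sqrt_pow2 eps Heps) at 2; apply sqrt_le_1_alt; lra.
Qed.

Section IncomingBranch.
Variables eps lam x : R.
Hypothesis Heps : 0 < eps.
Hypothesis Hx : 0 < x.
Hypothesis HU : U lam x < eps ^ 2.

Let s := s_fun eps lam x.

Lemma s_fun_pos : 0 < s.
Proof. apply sqrt_lt_R0; lra. Qed.

Lemma s_fun_sqr : s * s = eps ^ 2 - U lam x.
Proof. apply sqrt_sqrt; lra. Qed.

Lemma pi_minus_denom_pos : 0 < 2 / x * eps + s.
Proof.
  pose proof s_fun_pos; assert (0 < 2 / x) by (apply Rdiv_lt_0_compat; lra); nra.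
Qed.

Lemma integrand_denom_pi_minus : (1 - 2 / x) * pi_minus eps lam x - 2 / x * eps = - s.
Proof.
  pose proof pi_minus_denom_pos; pose proof s_fun_pos; pose proof s_fun_sqr.
  assert (E : (1 - 2 / x) * pi_minus eps lam x - 2 / x * eps + s =
              (s * s - (eps ^ 2 - U lam x)) / (2 / x * eps + s)).
  { unfold pi_minus, U; fold s; field; repeat split; intro; nra. }
  replace (s * s - (eps ^ 2 - U lam x)) with 0 in E by lra.
  rewrite Rdiv_0_l in E; lra.
Qed.

Lemma integrand_numer_pi_minus : 2 / x * pi_minus eps lam x + (1 + 2 / x) * eps =
  (2 * (1 + lam ^ 2 / x ^ 2) / x + (1 + 2 / x) * eps * s) / (2 / x * eps + s).
Proof.
  pose proof pi_minus_denom_pos; pose proof s_fun_pos.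
  unfold pi_minus; fold s; field; repeat split; intro; nra.
Qed.

Lemma integrand_numer_pi_minus_pos : 0 < 2 / x * pi_minus eps lam x + (1 + 2 / x) * eps.
Proof.
  rewrite integrand_numer_pi_minus.
  pose proof pi_minus_denom_pos; pose proof s_fun_pos.
  assert (0 < 2 / x) by (apply Rdiv_lt_0_compat; lra).
  assert (0 <= lam ^ 2 / x ^ 2)
    by (apply Rdiv_le_0_compat; [apply pow2_ge_0 | apply pow_lt; lra]).
  assert (0 < 2 * (1 + lam ^ 2 / x ^ 2) / x) by (apply Rdiv_lt_0_compat; lra).
  assert (0 < (1 + 2 / x) * eps * s) by (apply Rmult_lt_0_compat; [apply Rmult_lt_0_compat|]; lra).
  apply Rdiv_lt_0_compat; lra.
Qed.

Lemma integrand_numer_pi_minus_ge : 2 <= x ->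
  s / 2 <= 2 / x * pi_minus eps lam x + (1 + 2 / x) * eps.
Proof.
  intros Hx2; rewrite integrand_numer_pi_minus.
  pose proof pi_minus_denom_pos; pose proof s_fun_pos.
  assert (s <= eps) by (apply s_fun_le; lra).
  assert (0 < 2 / x) by (apply Rdiv_lt_0_compat; lra).
  assert (2 / x <= 1) by (apply Rcomplements.Rle_div_l; lra).
  assert (0 <= lam ^ 2 / x ^ 2)
    by (apply Rdiv_le_0_compat; [apply pow2_ge_0 | apply pow_lt; lra]).
  assert (0 < 2 * (1 + lam ^ 2 / x ^ 2) / x) by (apply Rdiv_lt_0_compat; lra).
  apply (Rcomplements.Rle_div_r (s / 2)); [lra|].
  assert (2 / x * eps <= eps) by nra.
  assert (s * (2 / x * eps + s) <= s * (2 * eps)) by (apply Rmult_le_compat_l; lra).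
  assert (eps * s <= (1 + 2 / x) * eps * s) by nra.
  lra.
Qed.

Lemma integrand_pi_minus_le : 2 <= x -> integrand eps x (pi_minus eps lam x) <= - / 2.
Proof.
  intros Hx2; unfold integrand; rewrite integrand_denom_pi_minus.
  pose proof s_fun_pos; pose proof (integrand_numer_pi_minus_ge Hx2).
  set (N := 2 / x * pi_minus eps lam x + (1 + 2 / x) * eps) in *.
  replace (N / - s) with (- (N / s)) by (field; lra).
  assert (/ 2 <= N / s) by (apply Rcomplements.Rle_div_r; lra); lra.
Qed.

Lemma pi_minus_eq : 2 < x -> pi_minus eps lam x = (2 / x * eps - s) / (1 - 2 / x).
Proof.
  intros Hx2; pose proof integrand_denom_pi_minus.
  assert (2 / x < 1) by (apply Rcomplements.Rlt_div_l; lra).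
  apply (Rmult_eq_reg_l (1 - 2 / x)); [|lra].
  replace ((1 - 2 / x) * ((2 / x * eps - s) / (1 - 2 / x))) with (2 / x * eps - s)
    by (field; lra).
  lra.
Qed.

End IncomingBranch.

Lemma G_in_at_2 eps lam : G_in eps lam 2 = 0.
Proof. exact (RInt_point (V := R_CompleteNormedModule) 2 _). Qed.

Section Subcritical.
Variables eps lam : R.
Hypothesis Heps : 0 < eps.
Hypothesis HU : forall t, 0 < t -> U lam t < eps ^ 2.

Let F t := integrand eps t (pi_minus eps lam t).

Lemma integrand_pi_minus_smooth n : derivable_n_on (fun t => 0 < t) n F.
Proof.
  unfold F, integrand, pi_minus, s_fun, U.
  derivable_n_on_rules; intros t Ht; try (apply pow_nonzero; lra); try lra;
    pose proof (HU t Ht) as HUt;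
    pose proof (pi_minus_denom_pos eps lam t Heps Ht HUt);
    pose proof (integrand_denom_pi_minus eps lam t Heps Ht HUt);
    pose proof (s_fun_pos eps lam t HUt);
    unfold pi_minus, s_fun, U in *; lra.
Qed.

Lemma integrand_pi_minus_ex_RInt a b : 0 < a -> 0 < b -> ex_RInt F a b.
Proof.
  intros Ha Hb; apply (derivable_n_on_ex_RInt (fun t => 0 < t) 0); auto.
  - apply is_interval_gt_0.
  - apply integrand_pi_minus_smooth.
Qed.

Lemma G_in_ex_derive_n x n : 0 < x -> ex_derive_n (G_in eps lam) n x.
Proof.
  intros Hx; apply (derivable_n_on_ex_derive_n (fun t => 0 < t) n _ x (open_gt 0)); auto.
  apply derivable_n_on_weaken, derivable_n_on_RInt.
  - apply open_gt.
  - apply is_interval_gt_0.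
  - lra.
  - apply integrand_pi_minus_smooth.
Qed.

Lemma G_in_le_slope x y : 2 <= x <= y -> G_in eps lam y <= G_in eps lam x - (y - x) / 2.
Proof.
  intros Hxy; unfold G_in; fold F.
  rewrite <- (RInt_Chasles F 2 x y) by (apply integrand_pi_minus_ex_RInt; lra).
  assert (RInt F x y <= - / 2 * (y - x)).
  { apply RInt_le_length; [lra | apply integrand_pi_minus_ex_RInt; lra |].
    intros z Hz; apply integrand_pi_minus_le; auto; [lra | apply HU | ]; lra. }
  unfold plus; simpl; lra.
Qed.

Lemma G_in_decreasing x y : 2 <= x -> x < y -> G_in eps lam y < G_in eps lam x.
Proof. intros Hx Hxy; pose proof (G_in_le_slope x y ltac:(lra)); lra. Qed.

Lemma G_in_is_lim : is_lim (G_in eps lam) p_infty m_infty.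
Proof.
  apply (is_lim_p_infty_of_le_affine _ 2 (/ 2)); [lra|].
  intros x Hx; pose proof (G_in_le_slope 2 x ltac:(lra)).
  rewrite G_in_at_2 in *; lra.
Qed.

End Subcritical.

Lemma xi_max_nonneg lam : 0 <= xi_max lam.
Proof.
  unfold xi_max.
  assert (H : sqrt (lam ^ 4 - 12 * lam ^ 2) <= sqrt ((lam ^ 2) ^ 2))
    by (apply sqrt_le_1_alt; nra).
  rewrite sqrt_pow2 in H by apply pow2_ge_0; lra.
Qed.

(* [x^2 - lam^2 x + 3 lam^2] is [x^4 U'(x) / 2]; its smaller root is [xi_max lam]. *)
Lemma U_deriv_numer_neg lam x : xi_max lam < x < lam ^ 2 / 2 ->
  x ^ 2 - lam ^ 2 * x + 3 * lam ^ 2 < 0.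
Proof.
  unfold xi_max; intros Hx.
  set (D := lam ^ 4 - 12 * lam ^ 2) in *.
  destruct (Rle_lt_dec D 0) as [HD|HD].
  - rewrite sqrt_neg_0 in Hx by exact HD; lra.
  - pose proof (sqrt_sqrt D (Rlt_le _ _ HD)); pose proof (sqrt_pos D).
    assert ((lam ^ 2 / 2 - x) ^ 2 < (sqrt D / 2) ^ 2) by nra.
    unfold D in *; nra.
Qed.

Lemma radial_cubic_root eps lam x : x <> 0 -> U lam x = eps ^ 2 -> radial_cubic eps lam x = 0.
Proof.
  intros Hx HU.
  assert (E := eps2_sub_U eps lam x Hx).
  rewrite HU, Rminus_diag in E.
  apply (Rmult_eq_reg_r (/ x ^ 3)); [lra|].
  apply Rinv_neq_0_compat, pow_nonzero; exact Hx.
Qed.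

Lemma turning_point_bounds eps lam xi0 : 1 < eps -> 0 < xi0 -> U lam xi0 = eps ^ 2 ->
  2 < xi0 /\ 2 * xi0 < lam ^ 2.
Proof.
  intros Heps Hxi0 HU.
  assert (Hc := radial_cubic_root eps lam xi0 ltac:(lra) HU).
  unfold radial_cubic in Hc.
  assert (0 < (eps ^ 2 - 1) * xi0 ^ 3) by (apply Rmult_lt_0_compat; [nra | apply pow_lt; lra]).
  assert (Hl : 2 * xi0 ^ 2 < lam ^ 2 * (xi0 - 2)) by nra.
  assert (H2 : 2 < xi0) by nra.
  split; nra.
Qed.

Definition radial_cubic_dq (eps lam xi0 u : R) : R :=
  (eps ^ 2 - 1) * (u ^ 2 + 3 * xi0 * u + 3 * xi0 ^ 2) + 2 * (u + 2 * xi0) - lam ^ 2.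

Lemma radial_cubic_shift eps lam xi0 u :
  radial_cubic eps lam (xi0 + u) = radial_cubic eps lam xi0 + u * radial_cubic_dq eps lam xi0 u.
Proof. unfold radial_cubic, radial_cubic_dq; ring. Qed.

Definition s_reg (eps lam xi0 t : R) : R :=
  sqrt (radial_cubic_dq eps lam xi0 (t ^ 2) / curve_xi xi0 t ^ 3).

Definition scat_pi (eps lam xi0 t : R) : R :=
  (2 / curve_xi xi0 t * eps + t * s_reg eps lam xi0 t) / (1 - 2 / curve_xi xi0 t).

Definition scat_numer (eps lam xi0 t : R) : R :=
  2 / curve_xi xi0 t * scat_pi eps lam xi0 t + (1 + 2 / curve_xi xi0 t) * eps.

Definition scat_density (eps lam xi0 t : R) : R :=
  2 * scat_numer eps lam xi0 t / s_reg eps lam xi0 t.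

Section Supercritical.
Variables eps lam xi0 : R.
Hypothesis Heps : 1 < eps.
Hypothesis Hmax : xi_max lam < xi0.
Hypothesis HU : U lam xi0 = eps ^ 2.

Lemma xi0_gt_2 : 2 < xi0.
Proof. pose proof (xi_max_nonneg lam); apply (turning_point_bounds eps lam); auto; lra. Qed.

Lemma curve_xi_gt_2 t : 2 < curve_xi xi0 t.
Proof. pose proof xi0_gt_2; pose proof (pow2_ge_0 t); unfold curve_xi; lra. Qed.

(* [radial_cubic_dq 0] is the slope of the cubic at its simple root [xi0]. *)
Lemma radial_cubic_dq_pos u : 0 <= u -> 0 < radial_cubic_dq eps lam xi0 u.
Proof.
  intros Hu; pose proof xi0_gt_2 as H2.
  destruct (turning_point_bounds eps lam xi0 Heps ltac:(lra) HU) as [_ Hl].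
  pose proof (U_deriv_numer_neg lam xi0 ltac:(split; lra)).
  assert (Hc := radial_cubic_root eps lam xi0 ltac:(lra) HU).
  assert (H0 : radial_cubic_dq eps lam xi0 0 * xi0 =
               3 * radial_cubic eps lam xi0 - 2 * (xi0 ^ 2 - lam ^ 2 * xi0 + 3 * lam ^ 2))
    by (unfold radial_cubic_dq, radial_cubic; ring).
  assert (0 < radial_cubic_dq eps lam xi0 0) by nra.
  assert (0 <= (eps ^ 2 - 1) * (u ^ 2 + 3 * xi0 * u)) by (apply Rmult_le_pos; nra).
  unfold radial_cubic_dq in *; nra.
Qed.

Lemma s_reg_pos t : 0 < s_reg eps lam xi0 t.
Proof.
  pose proof (curve_xi_gt_2 t).
  apply sqrt_lt_R0, Rdiv_lt_0_compat.
  - apply radial_cubic_dq_pos, pow2_ge_0.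
  - apply pow_lt; lra.
Qed.

Lemma s_fun_curve t : s_fun eps lam (curve_xi xi0 t) = Rabs t * s_reg eps lam xi0 t.
Proof.
  pose proof (curve_xi_gt_2 t); pose proof xi0_gt_2.
  unfold s_fun, s_reg; rewrite eps2_sub_U by lra.
  unfold curve_xi in *.
  rewrite radial_cubic_shift, (radial_cubic_root eps lam xi0), Rplus_0_l by (auto; lra).
  rewrite <- Rmult_div_assoc, sqrt_mult_alt by apply pow2_ge_0.
  f_equal; rewrite <- sqrt_Rsqr_abs; unfold Rsqr; f_equal; ring.
Qed.

Lemma U_lt_eps2_on_curve t : t <> 0 -> U lam (curve_xi xi0 t) < eps ^ 2.
Proof.
  intros Ht; pose proof (s_fun_curve t) as Hs; pose proof (s_reg_pos t).
  assert (0 < s_fun eps lam (curve_xi xi0 t))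
    by (rewrite Hs; apply Rmult_lt_0_compat; [apply Rabs_pos_lt|]; auto).
  unfold s_fun in *.
  destruct (Rlt_le_dec (U lam (curve_xi xi0 t)) (eps ^ 2)) as [|Hle]; auto.
  rewrite sqrt_neg_0 in * by lra; lra.
Qed.

Lemma curve_pi_eq t : t <> 0 -> curve_pi eps lam xi0 t = scat_pi eps lam xi0 t.
Proof.
  intros Ht; pose proof (curve_xi_gt_2 t).
  unfold curve_pi, scat_pi; destruct (Rlt_dec t 0) as [Hn|Hn].
  - rewrite pi_minus_eq, s_fun_curve, Rabs_left by (auto; lra || apply U_lt_eps2_on_curve; auto).
    f_equal; ring.
  - unfold pi_plus; rewrite s_fun_curve, Rabs_right by lra; reflexivity.
Qed.

Lemma integrand_curve_eq t : t <> 0 ->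
  integrand eps (curve_xi xi0 t) (curve_pi eps lam xi0 t) * (2 * t) = scat_density eps lam xi0 t.
Proof.
  intros Ht; rewrite curve_pi_eq by exact Ht.
  pose proof (curve_xi_gt_2 t); pose proof (s_reg_pos t).
  assert (2 / curve_xi xi0 t < 1) by (apply Rcomplements.Rlt_div_l; lra).
  assert (Hden : (1 - 2 / curve_xi xi0 t) * scat_pi eps lam xi0 t - 2 / curve_xi xi0 t * eps
                 = t * s_reg eps lam xi0 t) by (unfold scat_pi; field; lra).
  unfold integrand, scat_density, scat_numer; rewrite Hden.
  field; repeat split; lra || exact Ht.
Qed.

Lemma scat_numer_bound t :
  0 < scat_numer eps lam xi0 t /\ Rabs t * s_reg eps lam xi0 t <= 2 * scat_numer eps lam xi0 t.
Proof.
  pose proof (curve_xi_gt_2 t) as Hx; pose proof (s_reg_pos t).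
  set (x := curve_xi xi0 t) in *.
  rewrite <- s_fun_curve; fold x.
  destruct (Rlt_dec t 0) as [Hn|Hn].
  - assert (HUt := U_lt_eps2_on_curve t ltac:(lra)); fold x in HUt.
    assert (HN : scat_numer eps lam xi0 t = 2 / x * pi_minus eps lam x + (1 + 2 / x) * eps).
    { unfold scat_numer; rewrite <- curve_pi_eq by lra.
      unfold curve_pi; destruct (Rlt_dec t 0); [reflexivity | lra]. }
    rewrite HN; split.
    + apply integrand_numer_pi_minus_pos; auto; lra.
    + pose proof (integrand_numer_pi_minus_ge eps lam x ltac:(lra) ltac:(lra) HUt ltac:(lra)).
      lra.
  - assert (0 < 2 / x) by (apply Rdiv_lt_0_compat; lra).
    assert (2 / x < 1) by (apply Rcomplements.Rlt_div_l; lra).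
    assert (0 <= scat_pi eps lam xi0 t).
    { unfold scat_pi; fold x; apply Rdiv_le_0_compat; [|lra].
      assert (0 <= t * s_reg eps lam xi0 t) by (apply Rmult_le_pos; lra); nra. }
    pose proof (s_fun_le eps lam x ltac:(lra) ltac:(lra)).
    unfold scat_numer; fold x; split; nra.
Qed.

Lemma scat_density_bound t : 0 < scat_density eps lam xi0 t /\ Rabs t <= scat_density eps lam xi0 t.
Proof.
  destruct (scat_numer_bound t) as [Hpos Hle]; pose proof (s_reg_pos t).
  unfold scat_density; split.
  - apply Rdiv_lt_0_compat; lra.
  - apply Rcomplements.Rle_div_r; lra.
Qed.

Lemma scat_density_smooth n : derivable_n_on (fun _ => True) n (scat_density eps lam xi0).
Proof.
  pose proof xi0_gt_2.
  unfold scat_density, scat_numer, scat_pi, s_reg, radial_cubic_dq, curve_xi.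
  derivable_n_on_rules; intros t _; pose proof (pow2_ge_0 t);
    try (assert (2 / (xi0 + t ^ 2) < 1) by (apply Rcomplements.Rlt_div_l; lra));
    try (apply pow_nonzero); try lra.
  all: pose proof (radial_cubic_dq_pos _ (pow2_ge_0 t)) as Hq; pose proof (s_reg_pos t) as Hs.
  all: unfold s_reg, radial_cubic_dq, curve_xi in *; auto.
  all: try lra.
  all: apply Rdiv_lt_0_compat; [lra | apply pow_lt; lra].
Qed.

Lemma G_scat_eq tau : G_scat eps lam xi0 tau = RInt (scat_density eps lam xi0) 0 tau.
Proof.
  apply RInt_ext; intros x Hx; apply integrand_curve_eq, (Rmin_Rmax_0_neq tau x Hx).
Qed.

Lemma scat_density_ex_RInt a b : ex_RInt (scat_density eps lam xi0) a b.
Proof.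
  apply (derivable_n_on_ex_RInt (fun _ => True) 0); auto.
  - apply is_interval_True.
  - apply scat_density_smooth.
Qed.

Lemma G_scat_ex_RInt tau : ex_RInt (fun t => integrand eps (curve_xi xi0 t)
                                             (curve_pi eps lam xi0 t) * (2 * t)) 0 tau.
Proof.
  apply (ex_RInt_ext (scat_density eps lam xi0)).
  - intros x Hx; symmetry; apply integrand_curve_eq, (Rmin_Rmax_0_neq tau x Hx).
  - apply scat_density_ex_RInt.
Qed.

Lemma G_scat_ex_derive_n tau n : ex_derive_n (G_scat eps lam xi0) n tau.
Proof.
  apply (ex_derive_n_ext (fun tau => RInt (scat_density eps lam xi0) 0 tau)).
  { intros t; symmetry; apply G_scat_eq. }
  apply (derivable_n_on_ex_derive_n (fun _ => True) n _ tau open_true); auto.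
  apply derivable_n_on_weaken, derivable_n_on_RInt; auto.
  - apply open_true.
  - apply is_interval_True.
  - apply scat_density_smooth.
Qed.

Lemma G_scat_increasing s t : s < t -> G_scat eps lam xi0 s < G_scat eps lam xi0 t.
Proof.
  intros Hst; rewrite !G_scat_eq.
  rewrite <- (RInt_Chasles (scat_density eps lam xi0) 0 s t) by apply scat_density_ex_RInt.
  assert (0 < RInt (scat_density eps lam xi0) s t); [|unfold plus; simpl; lra].
  apply RInt_gt_0; auto.
  - intros x _; apply scat_density_bound.
  - intros x _; apply (derivable_n_on_continuous (fun _ => True) 0); auto.
    apply scat_density_smooth.
Qed.

Lemma G_scat_ge_affine tau : 1 <= tau -> 1 * (tau - 1) <= G_scat eps lam xi0 tau.
Proof.
  intros Htau; rewrite G_scat_eq.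
  rewrite <- (RInt_Chasles (scat_density eps lam xi0) 0 1 tau) by apply scat_density_ex_RInt.
  assert (0 <= RInt (scat_density eps lam xi0) 0 1).
  { apply RInt_ge_0; [lra | apply scat_density_ex_RInt |].
    intros x _; apply Rlt_le, scat_density_bound. }
  assert (1 * (tau - 1) <= RInt (scat_density eps lam xi0) 1 tau).
  { apply RInt_ge_length; [lra | apply scat_density_ex_RInt |].
    intros x Hx; pose proof (proj2 (scat_density_bound x)); rewrite Rabs_right in *; lra. }
  unfold plus; simpl; lra.
Qed.

Lemma G_scat_le_affine tau : tau <= -1 -> G_scat eps lam xi0 tau <= 1 * (tau - -1).
Proof.
  intros Htau; rewrite G_scat_eq.
  rewrite <- (RInt_Chasles (scat_density eps lam xi0) 0 (-1) tau) by apply scat_density_ex_RInt.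
  rewrite <- (opp_RInt_swap _ (-1) 0), <- (opp_RInt_swap _ tau (-1)) by apply scat_density_ex_RInt.
  assert (0 <= RInt (scat_density eps lam xi0) (-1) 0).
  { apply RInt_ge_0; [lra | apply scat_density_ex_RInt |].
    intros x _; apply Rlt_le, scat_density_bound. }
  assert (1 * (-1 - tau) <= RInt (scat_density eps lam xi0) tau (-1)).
  { apply RInt_ge_length; [lra | apply scat_density_ex_RInt |].
    intros x Hx; pose proof (proj2 (scat_density_bound x)); rewrite Rabs_left in *; lra. }
  unfold plus, opp; simpl; lra.
Qed.

End Supercritical.

Theorem lemma3 (eps lam : R) (Heps : 1 < eps) (Hlam : 0 <= lam)
  (Hne : lam <> lambda_c eps) :
  (* (a) *)
  (lam < lambda_c eps ->
     (forall x, 2 <= x -> ex_RInt (fun t => integrand eps t (pi_minus eps lam t)) 2 x)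
     /\ (forall x, 2 <= x -> forall n, ex_derive_n (G_in eps lam) n x)
     /\ (forall x y, 2 <= x -> x < y -> G_in eps lam y < G_in eps lam x)
     /\ G_in eps lam 2 = 0
     /\ is_lim (G_in eps lam) p_infty m_infty)
  /\
  (* (b) *)
  (lambda_c eps < lam ->
   forall xi0 : R, xi_max lam < xi0 -> U lam xi0 = eps ^ 2 ->
     (forall tau, ex_RInt (fun t => integrand eps (curve_xi xi0 t)
                                     (curve_pi eps lam xi0 t) * (2 * t)) 0 tau)
     /\ (forall tau n, ex_derive_n (G_scat eps lam xi0) n tau)
     /\ (forall s t, s < t -> G_scat eps lam xi0 s < G_scat eps lam xi0 t)
     /\ G_scat eps lam xi0 0 = 0
     /\ is_lim (G_scat eps lam xi0) m_infty m_infty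
     /\ is_lim (G_scat eps lam xi0) p_infty p_infty).
Proof.
  split.
  - intros Hc.
    assert (Heps0 : 0 < eps) by lra.
    assert (HU : forall t, 0 < t -> U lam t < eps ^ 2)
      by (intros t Ht; apply U_lt_eps2_subcritical; auto).
    repeat split.
    + intros x Hx; apply integrand_pi_minus_ex_RInt; auto; lra.
    + intros x Hx n; apply G_in_ex_derive_n; auto; lra.
    + intros x y; apply G_in_decreasing; auto.
    + apply G_in_at_2.
    + apply G_in_is_lim; auto.
  (* [lambda_c eps < lam] only serves to guarantee that such a turning point exists. *)
  - intros _ xi0 Hmax HU.
    repeat split.
    + apply G_scat_ex_RInt; auto.
    + apply G_scat_ex_derive_n; auto.
    + apply G_scat_increasing; auto.
    + exact (RInt_point (V := R_CompleteNormedModule) 0 _).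
    + apply (is_lim_m_infty_of_le_affine _ (-1) 1); [lra|]; apply G_scat_le_affine; auto.
    + apply (is_lim_p_infty_of_ge_affine _ 1 1); [lra|]; apply G_scat_ge_affine; auto.
Qed.
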